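(* The wreath product $\mathbb{Z}_2 \wr \mathbb{Z}^2$ is Cayley $2$-tape linear-time computable.
   Context: For $k>1$, a $k$-tape Turing machine has $k$ semi-infinite tapes, each with the unmodifiable symbol $\boxplus$ in its leftmost cell (occurring only there); $\boxdot$ is the blank symbol. A function $f : \Sigma^* \to \Sigma^*$ is computed on a $k$-tape Turing machine in linear time if there is such a machine and a constant $C>0$ such that for every input $x \in \Sigma^*$ of length $n$, started with first tape $\boxplus x \boxdot^\infty$, the other tapes $\boxplus \boxdot^\infty$, all heads on $\boxplus$, the machine halts in an accepting state in at most $Cn$ steps with the first tape having prefix $\boxplus f(x) \boxdot$ (no restriction on anything else). A finitely generated group $G$ with finite set of semigroup generators $S$ is Cayley $k$-tape linear-time computable if there exist a finite alphabet $\Sigma$, a language $L \subseteq \Sigma^*$, a bijection $\psi : L \to G$ and, for each $s \in S$, a function $f_s : \Sigma^* \to \Sigma^*$ computed on a $k$-tape Turing machine in linear time such that $\psi(f_s(w)) = \psi(w)s$ for all $w \in L$ (this does not depend on the choice of $S$). $\mathbb{Z}_2 \wr \mathbb{Z}^2$ is the restricted wreath product (lamplighter group over $\mathbb{Z}^2$). *)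

From HB Require Import structures.
From mathcomp Require Import all_boot all_order all_algebra.
From mathcomp Require Import finmap.
Set Implicit Arguments. Unset Strict Implicit. Unset Printing Implicit Defensive.
Import GRing.Theory.

(* Tape symbols over input alphabet S and extra work alphabet W:             *)
(*   Some None       = the left-end marker (boxplus)                        *)
(*   Some (Some (inl a)) = input letter a, Some (Some (inr g)) = work symbol *)
Definition tsym (S W : finType) : finType := option (option (S + W)).
Definition blank {S W : finType} : tsym S W := None.
Definition mark {S W : finType} : tsym S W := Some None.
Definition inp {S W : finType} (a : S) : tsym S W := Some (Some (inl a)).

Inductive move := MoveL | MoveR | Stay.

Record TM (k : nat) (S : finType) := {
  tm_state : finType;
  tm_work : finType;
  tm_start : tm_state;
  tm_accept : pred tm_state;
  tm_delta : tm_state -> {ffun 'I_k -> tsym S tm_work} ->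
             option (tm_state * {ffun 'I_k -> tsym S tm_work * move})
}.
Arguments tm_start {k S} _.
Arguments tm_accept {k S} _.
Arguments tm_delta {k S} _.

(* The marker is unmodifiable and occurs only in the leftmost cell: when a   *)
(* head reads the marker it rewrites the marker and does not move left; when *)
(* it reads any other symbol it does not write the marker.                   *)
Definition TM_wf k S (M : TM k S) : Prop :=
  forall q r q' act (i : 'I_k), tm_delta M q r = Some (q', act) ->
    ((r i == mark) = ((act i).1 == mark)) /\ (r i == mark -> (act i).2 <> MoveL).

Record conf k S (M : TM k S) := {
  c_state : tm_state M;
  c_tape : 'I_k -> nat -> tsym S (tm_work M);
  c_head : 'I_k -> nat
}.

Definition c_read k S (M : TM k S) (c : conf M) : {ffun 'I_k -> tsym S (tm_work M)} :=
  [ffun i => c_tape c i (c_head c i)].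

Definition halted k S (M : TM k S) (c : conf M) : bool :=
  if tm_delta M (c_state c) (c_read c) is None then true else false.

Definition do_move (m : move) (h : nat) : nat :=
  match m with MoveL => h.-1 | MoveR => h.+1 | Stay => h end.

Definition step k S (M : TM k S) (c : conf M) : option (conf M) :=
  match tm_delta M (c_state c) (c_read c) with
  | None => None
  | Some (q', act) =>
      Some {| c_state := q';
              c_tape := fun i j => if j == c_head c i then (act i).1 else c_tape c i j;
              c_head := fun i => do_move (act i).2 (c_head c i) |}
  end.

Fixpoint run k S (M : TM k S) (t : nat) (c : conf M) : conf M :=
  match t with
  | 0 => c
  | t'.+1 => match step c with Some c' => run t' c' | None => c end
  end.

Definition init_conf k S (M : TM k S) (i0 : 'I_k) (x : seq S) : conf M :=
  {| c_state := tm_start M;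
     c_tape := fun i j =>
       if j == 0 then mark
       else if i == i0 then nth blank [seq inp a | a <- x] j.-1
       else blank;
     c_head := fun _ => 0 |}.

Definition tape_prefix k S (M : TM k S) (c : conf M) (i0 : 'I_k) (y : seq S) : Prop :=
  c_tape c i0 0 = mark /\
  (forall j, j < size y -> c_tape c i0 j.+1 = nth blank [seq inp a | a <- y] j) /\
  c_tape c i0 (size y).+1 = blank.

Definition lin_time_computable (k : nat) (S : finType) (f : seq S -> seq S) : Prop :=
  exists (i0 : 'I_k), nat_of_ord i0 = 0 /\
  exists (M : TM k S), TM_wf M /\
  exists C : nat, 0 < C /\
  forall x : seq S,
    exists t, t <= C * (size x).+1 /\
      let c := run t (init_conf M i0 x) in
      halted c /\ tm_accept M (c_state c) /\ tape_prefix c i0 (f x).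

Definition cayley_lin_time (k : nat) (G : eqType) (mul : G -> G -> G) (gens : seq G) : Prop :=
  exists (Sig : finType) (L : pred (seq Sig)) (psi : seq Sig -> G),
    {in L &, injective psi} /\
    (forall g : G, exists2 w, w \in L & psi w = g) /\
    (forall s, s \in gens ->
       exists f : seq Sig -> seq Sig,
         lin_time_computable k f /\
         forall w, w \in L -> f w \in L /\ psi (f w) = mul (psi w) s).

(* The lamplighter group Z_2 wr Z^2: pairs (A, p) with A a finite set of    *)
(* lit lamps in Z^2 and p the lamplighter position;                          *)
Local Open Scope fset_scope.
Definition Z2 := (int * int)%type.
Definition lamp := ({fset Z2} * Z2)%type.
Definition addZ2 (p q : Z2) : Z2 := (p.1 + q.1, p.2 + q.2)%R.
Definition shiftZ2 (p : Z2) (B : {fset Z2}) : {fset Z2} := [fset addZ2 p x | x in B].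
Definition symdiff (A B : {fset Z2}) : {fset Z2} := (A `\` B) `|` (B `\` A).
Definition lamp_mul (g h : lamp) : lamp :=
  (symdiff g.1 (shiftZ2 g.2 h.1), addZ2 g.2 h.2).

Definition lamp_gens : seq lamp :=
  [:: ([fset ((0:int), (0:int))], ((0:int), (0:int)));
      (fset0, ((1:int), (0:int)));  (fset0, ((-1)%R, (0:int)));
      (fset0, ((0:int), (1:int)));  (fset0, ((0:int), (-1)%R)) ].

From HB Require Import structures.
From mathcomp Require Import all_boot all_order all_algebra finmap.
From mathcomp Require Import zify.
Set Implicit Arguments. Unset Strict Implicit. Unset Printing Implicit Defensive.

(* An element (A, p) of Z_2 wr Z^2 is written as the lamplighter position p
   followed by the lexicographically sorted list of its lit lamps taken
   relative to p, every integer in signed unary.  In this normal form each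
   generator acts by a finite-state sequential transducer with boundedly many
   output letters per input letter: a move by d adds d to p and subtracts d
   from every lamp, which keeps the list sorted, and a toggle inserts or
   deletes the point (0, 0), which a left-to-right scan of the sorted list
   finds.  (With absolute lamp positions a toggle would have to compare every
   lamp with p.)  A transducer with
   bounded output runs in linear time on two tapes: stream the input through
   it onto the second tape, rewind both heads and copy the result back. *)

(** * Sequential transducers *)

Section Transducer.
Variables (S Q : Type) (tstep : Q -> S -> Q * seq S) (tfinal : Q -> seq S).

Fixpoint transduce (q : Q) (w : seq S) : seq S :=
  if w is a :: w' then (tstep q a).2 ++ transduce (tstep q a).1 w' else tfinal q.

Fixpoint tr_state (q : Q) (w : seq S) : Q :=
  if w is a :: w' then tr_state (tstep q a).1 w' else q.

Fixpoint tr_output (q : Q) (w : seq S) : seq S :=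
  if w is a :: w' then (tstep q a).2 ++ tr_output (tstep q a).1 w' else [::].

Lemma transduceE q w : transduce q w = tr_output q w ++ tfinal (tr_state q w).
Proof. by elim: w q => [|a w IH] q //=; rewrite IH catA. Qed.

Lemma size_transduce K q w :
  (forall q a, size (tstep q a).2 <= K) -> (forall q, size (tfinal q) <= K) ->
  size (transduce q w) <= K * (size w).+1.
Proof.
move=> Kstep Kfinal; elim: w q => [|a w IH] q /=; first by rewrite muln1.
by rewrite size_cat mulnS leq_add.
Qed.

End Transducer.

(** * A two-tape machine running a transducer *)

Lemma runD k S (M : TM k S) m n (c : conf M) : run (m + n) c = run n (run m c).
Proof.
elim: m c => [|m IH] c //=; case E: (step c) => [c'|] //.
by elim: n {IH} => [|n IHn] //=; rewrite E.
Qed.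

Lemma runSr k S (M : TM k S) n (c : conf M) : run n.+1 c = run n (run 1 c).
Proof. by rewrite -add1n runD. Qed.

Lemma runS k S (M : TM k S) n (c : conf M) : run n.+1 c = run 1 (run n c).
Proof. by rewrite -addn1 runD. Qed.

Section TransducerMachine.
Variables (S Q : finType) (q0 : Q) (tstep : Q -> S -> Q * seq S) (tfinal : Q -> seq S).
Variable K : nat.
Hypotheses (tstep_size : forall q a, size (tstep q a).2 <= K)
           (tfinal_size : forall q, size (tfinal q) <= K).

Local Notation sym := (tsym S void).

Definition block q (oa : option S) : seq S :=
  if oa is Some a then (tstep q a).2 else tfinal q.

Lemma size_block q oa : size (block q oa) <= K.
Proof. by case: oa => [a|]; [exact: tstep_size | exact: tfinal_size]. Qed.

Inductive ctrl := Read of Q | Emit of Q & option S & 'I_K.+1 | Rewind | Copy | Done.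

Definition ctrl_code (s : ctrl) : Q + Q * option S * 'I_K.+1 + option bool :=
  match s with
  | Read q => inl (inl q) | Emit q oa i => inl (inr (q, oa, i))
  | Rewind => inr None | Copy => inr (Some false) | Done => inr (Some true)
  end.

Definition ctrl_decode (c : Q + Q * option S * 'I_K.+1 + option bool) : ctrl :=
  match c with
  | inl (inl q) => Read q | inl (inr (q, oa, i)) => Emit q oa i
  | inr None => Rewind | inr (Some false) => Copy | inr (Some true) => Done
  end.

Lemma ctrl_codeK : cancel ctrl_code ctrl_decode. Proof. by case. Qed.

HB.instance Definition _ := Finite.copy ctrl (can_type ctrl_codeK).

Definition tape_of (s : seq S) (j : nat) : sym :=
  if j is j'.+1 then nth blank [seq inp a | a <- s] j' else mark.

Definition letter_of (r : sym) : option S := if r is Some (Some (inl a)) then Some a else None.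

(* [Emit q oa i] writes letter [i] of the block that the transducer outputs on
   reading [oa] ([None] at the end of the input) onto tape 1. *)
Definition ctrl_step (s : ctrl) (r0 r1 : sym) : option (ctrl * (sym * move) * (sym * move)) :=
  match s with
  | Read q =>
      if r0 == mark then Some (Read q, (mark, MoveR), (mark, MoveR))
      else Some (Emit q (letter_of r0) ord0, (r0, Stay), (r1, Stay))
  | Emit q oa i =>
      if i < size (block q oa) then
        Some (Emit q oa (inord i.+1), (r0, Stay), (tape_of (block q oa) i.+1, MoveR))
      else if oa is Some a then Some (Read (tstep q a).1, (r0, MoveR), (r1, Stay))
      else Some (Rewind, (r0, Stay), (r1, Stay))
  | Rewind =>
      if (r0 == mark) && (r1 == mark) then Some (Copy, (mark, MoveR), (mark, MoveR))
      else Some (Rewind, (r0, MoveL), (r1, MoveL))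
  | Copy =>
      if r1 == blank then Some (Done, (blank, Stay), (r1, Stay))
      else Some (Copy, (r1, MoveR), (r1, MoveR))
  | Done => None
  end.

(* Makes any action respect the marker discipline of [TM_wf], so that
   [ctrl_step] does not have to. *)
Definition guard (r : sym) (a : sym * move) : sym * move :=
  if r == mark then (mark, if a.2 is MoveL then Stay else a.2)
  else (if a.1 == mark then r else a.1, a.2).

Definition tm_step (s : ctrl) (r : {ffun 'I_2 -> sym}) :=
  if ctrl_step s (r ord0) (r ord_max) is Some (s', a0, a1)
  then Some (s', [ffun i => guard (r i) (if i == ord0 then a0 else a1)])
  else None.

Definition transducer_tm : TM 2 S :=
  {| tm_state := ctrl; tm_work := void; tm_start := Read q0;
     tm_accept := pred1 Done; tm_delta := tm_step |}.

Lemma transducer_tm_wf : TM_wf transducer_tm.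
Proof.
move=> s r s' act i /=; rewrite /tm_step.
case: (ctrl_step s _ _) => [[[s'' a0] a1]|] // [_ <-]; rewrite ffunE /guard.
set a := if i == ord0 then a0 else a1.
case rM: (r i == mark) => /=; first by split => //; case: a.2.
by case: ifP => [aM|->]; rewrite ?rM ?aM.
Qed.

Definition conf_is (c : conf transducer_tm) s h0 h1 (t0 t1 : nat -> sym) : Prop :=
  [/\ c_state c = s, c_head c ord0 = h0, c_head c ord_max = h1,
      c_tape c ord0 =1 t0 & c_tape c ord_max =1 t1].

Definition upd (t : nat -> sym) h w : nat -> sym := fun j => if j == h then w else t j.

Lemma ord2P (i : 'I_2) : i = ord0 \/ i = ord_max.
Proof. by case: i => [[|[|//]] ?]; [left | right]; exact: val_inj. Qed.

Lemma run1_conf c s h0 h1 t0 t1 s' a0 a1 h0' h1' t0' t1' :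
  conf_is c s h0 h1 t0 t1 -> ctrl_step s (t0 h0) (t1 h1) = Some (s', a0, a1) ->
  do_move (guard (t0 h0) a0).2 h0 = h0' -> do_move (guard (t1 h1) a1).2 h1 = h1' ->
  upd t0 h0 (guard (t0 h0) a0).1 =1 t0' -> upd t1 h1 (guard (t1 h1) a1).1 =1 t1' ->
  conf_is (run 1 c) s' h0' h1' t0' t1'.
Proof.
case: c => s0 tp hd [/= -> H0 H1 T0 T1] E <- <- U0 U1.
have R i : tp i (hd i) = if i == ord0 then t0 h0 else t1 h1.
  by case: (ord2P i) => ->; rewrite ?H0 ?T0 ?H1 ?T1.
rewrite /= /step /c_read /= /tm_step !ffunE !R /= E.
split => //= [||j|j]; rewrite ?ffunE ?R /=.
- by rewrite H0.
- by rewrite H1.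
- by rewrite -U0 /upd H0; case: (j =P h0) => // _; exact: T0.
- by rewrite -U1 /upd H1; case: (j =P h1) => // _; exact: T1.
Qed.

Definition marked (t : nat -> sym) := forall j, (t j == mark) = (j == 0).

Lemma tape_of_marked s : marked (tape_of s).
Proof. by case=> [|j] //=; elim: s j => [|a s IH] [|j] //=; exact: IH. Qed.

Lemma tape_of_size s : tape_of s (size s).+1 = blank.
Proof. by rewrite /= nth_default ?size_map. Qed.

Lemma tape_of_nth s a j : j < size s -> tape_of s j.+1 = inp (nth a s j).
Proof. by move=> lt_js; rewrite /= (nth_map a). Qed.

Lemma tape_of_nonblank s j : j < size s -> tape_of s j.+1 != blank.
Proof. by case: s => // a s lt_js; rewrite (tape_of_nth a lt_js). Qed.

Lemma upd_id t h : upd t h (t h) =1 t.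
Proof. by move=> j; rewrite /upd; case: (j =P h) => [->|]. Qed.

Lemma upd_tape_of_take o s i : i < size s ->
  upd (tape_of (o ++ take i s)) (size o + i).+1 (tape_of s i.+1) =1 tape_of (o ++ take i.+1 s).
Proof.
move=> lt_is; have [a _] : exists a : S, True by case: s lt_is => // a; exists a.
case=> [|j] //; rewrite /upd eqSS (take_nth a lt_is) -rcons_cat (tape_of_nth a lt_is) /tape_of.
rewrite map_rcons nth_rcons size_map size_cat size_take lt_is.
case: ltngtP => // lt_Nj; rewrite nth_default // size_map size_cat size_take lt_is.
exact: ltnW.
Qed.

Lemma guard_self r m : m <> MoveL -> guard r (r, m) = (r, m).
Proof. by move=> nL; rewrite /guard; case: eqP => [->|] //; case: m nL. Qed.

Lemma guard_write r w m : r != mark -> w != mark -> guard r (w, m) = (w, m).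
Proof. by rewrite /guard => /negbTE -> /negbTE ->. Qed.

Lemma guard_left t h : marked t ->
  guard (t h) (t h, MoveL) = (t h, if h is 0 then Stay else MoveL).
Proof.
move=> mt; rewrite /guard mt; case: h => [|h] //=.
by have /eqP -> : t 0 == mark by rewrite mt.
Qed.

Lemma emit_run q oa o i n c h0 t0 : i + n = size (block q oa) ->
  conf_is c (Emit q oa (inord i)) h0 (size o + i).+1 t0 (tape_of (o ++ take i (block q oa))) ->
  conf_is (run n c) (Emit q oa (inord (size (block q oa))))
    h0 (size o + size (block q oa)).+1 t0 (tape_of (o ++ block q oa)).
Proof.
elim: n i c => [|n IH] i c Hin Hc.
  by rewrite addn0 in Hin; rewrite Hin take_size in Hc.
have lt_i : i < size (block q oa) by lia.
have lt_iK : i < K.+1 by rewrite ltnS (leq_trans (ltnW lt_i)) ?size_block.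
have blank_i : tape_of (o ++ take i (block q oa)) (size o + i).+1 = blank.
  by rewrite -(tape_of_size (o ++ take i (block q oa))) size_cat size_take lt_i.
have wNmark : tape_of (block q oa) i.+1 != mark by rewrite tape_of_marked.
rewrite runSr; apply: (IH i.+1); first lia.
apply: (run1_conf Hc).
- by rewrite /= inordK // lt_i.
- by rewrite guard_self.
- by rewrite blank_i guard_write // addnS.
- by rewrite guard_self //; exact: upd_id.
- by rewrite blank_i guard_write //; exact: upd_tape_of_take.
Qed.

Lemma read_block_run x j q oa o c : letter_of (tape_of x j.+1) = oa ->
  conf_is c (Read q) j.+1 (size o).+1 (tape_of x) (tape_of o) ->
  conf_is (run (size (block q oa)).+1 c) (Emit q oa (inord (size (block q oa))))
    j.+1 (size o + size (block q oa)).+1 (tape_of x) (tape_of (o ++ block q oa)).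
Proof.
move=> xj Hc; rewrite runSr; apply: (@emit_run q oa o 0) => //.
have -> : inord 0 = ord0 :> 'I_K.+1 by exact/val_inj/inordK.
apply: (run1_conf Hc).
- by rewrite /ctrl_step tape_of_marked xj.
- by rewrite guard_self.
- by rewrite guard_self // addn0.
- by rewrite guard_self //; exact: upd_id.
- by rewrite guard_self // take0 cats0; exact: upd_id.
Qed.

Lemma read_letter_run u a v q o c :
  let x := u ++ a :: v in let blk := (tstep q a).2 in
  conf_is c (Read q) (size u).+1 (size o).+1 (tape_of x) (tape_of o) ->
  conf_is (run (size blk).+2 c) (Read (tstep q a).1)
    (size u).+2 (size (o ++ blk)).+1 (tape_of x) (tape_of (o ++ blk)).
Proof.
move=> x blk Hc.
have xa : tape_of x (size u).+1 = inp a.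
  by rewrite (tape_of_nth a) ?nth_cat ?ltnn ?subnn // size_cat /= addnS ltnS leq_addr.
have Hc' := read_block_run (oa := Some a) (congr1 letter_of xa) Hc.
rewrite runS; apply: (run1_conf Hc').
- by rewrite /= inordK ?ltnn // ltnS.
- by rewrite guard_self.
- by rewrite guard_self // size_cat.
- by rewrite guard_self //; exact: upd_id.
- by rewrite guard_self //; exact: upd_id.
Qed.

Lemma read_end_run x q o c :
  conf_is c (Read q) (size x).+1 (size o).+1 (tape_of x) (tape_of o) ->
  conf_is (run (size (tfinal q)).+2 c) Rewind
    (size x).+1 (size (o ++ tfinal q)).+1 (tape_of x) (tape_of (o ++ tfinal q)).
Proof.
move=> Hc; have Hc' := read_block_run (oa := None) (congr1 letter_of (tape_of_size x)) Hc.
rewrite runS; apply: (run1_conf Hc').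
- by rewrite /= inordK ?ltnn // ltnS.
- by rewrite guard_self.
- by rewrite guard_self // size_cat.
- by rewrite guard_self //; exact: upd_id.
- by rewrite guard_self //; exact: upd_id.
Qed.

Lemma read_input_run x u v q o c : x = u ++ v ->
  conf_is c (Read q) (size u).+1 (size o).+1 (tape_of x) (tape_of o) ->
  let out := tr_output tstep q v in
  conf_is (run (size out + 2 * size v) c) (Read (tr_state tstep q v))
    (size x).+1 (size (o ++ out)).+1 (tape_of x) (tape_of (o ++ out)).
Proof.
elim: v u q o c => [|a v IH] u q o c ex Hc /=.
  by move: Hc; rewrite ex !cats0.
have -> : size ((tstep q a).2 ++ tr_output tstep (tstep q a).1 v) + 2 * (size v).+1 =
          (size (tstep q a).2).+2 + (size (tr_output tstep (tstep q a).1 v) + 2 * size v).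
  by rewrite size_cat; lia.
rewrite runD catA; apply: (IH (rcons u a)); first by rewrite cat_rcons.
by rewrite size_rcons; move: Hc; rewrite ex; exact: read_letter_run.
Qed.

Lemma rewind_run n c h0 h1 t0 t1 : marked t0 -> marked t1 -> maxn h0 h1 = n ->
  conf_is c Rewind h0 h1 t0 t1 -> conf_is (run n c) Rewind 0 0 t0 t1.
Proof.
move=> m0 m1; elim: n h0 h1 c => [|n IH] h0 h1 c hn Hc.
  have [h00 h10] : h0 = 0 /\ h1 = 0 by lia.
  by rewrite h00 h10 in Hc.
rewrite runSr; apply: (IH h0.-1 h1.-1); first lia.
apply: (run1_conf Hc).
- by rewrite /ctrl_step m0 m1; case: h0 h1 hn {Hc} => [|h0] [|h1].
- by rewrite guard_left //; case: h0 {hn Hc}.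
- by rewrite guard_left //; case: h1 {hn Hc}.
- by rewrite guard_left //; exact: upd_id.
- by rewrite guard_left //; exact: upd_id.
Qed.

Definition copy_tape (o x : seq S) j k : sym := if k <= j then tape_of o k else tape_of x k.

Lemma copy_run o x j n c : j + n = size o ->
  conf_is c Copy j.+1 j.+1 (copy_tape o x j) (tape_of o) ->
  conf_is (run n c) Copy (size o).+1 (size o).+1 (copy_tape o x (size o)) (tape_of o).
Proof.
elim: n j c => [|n IH] j c hj Hc; first by rewrite -hj addn0.
have lt_j : j < size o by lia.
have r0 : copy_tape o x j j.+1 = tape_of x j.+1 by rewrite /copy_tape ltnn.
rewrite runSr; apply: (IH j.+1); first lia.
apply: (run1_conf Hc).
- by rewrite /ctrl_step (negbTE (tape_of_nonblank lt_j)).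
- by rewrite r0 guard_write // ?tape_of_marked.
- by rewrite guard_self.
- rewrite r0 guard_write ?tape_of_marked // => k.
  by rewrite /upd /copy_tape [k <= j.+1]leq_eqVlt ltnS; case: eqP => [->|].
- by rewrite guard_self //; exact: upd_id.
Qed.

Lemma copy_done o x c :
  conf_is c Copy (size o).+1 (size o).+1 (copy_tape o x (size o)) (tape_of o) ->
  let c' := run 1 c in
  halted c' /\ tm_accept transducer_tm (c_state c') /\ tape_prefix c' ord0 o.
Proof.
move=> Hc.
have [/= S' _ _ T0 _] : conf_is (run 1 c) Done (size o).+1 (size o).+1
    (upd (copy_tape o x (size o)) (size o).+1 blank) (tape_of o).
  apply: (run1_conf Hc).
  - by rewrite /ctrl_step ifT // tape_of_size.
  - by rewrite guard_write // /copy_tape ltnn tape_of_marked.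
  - by rewrite guard_self.
  - by rewrite guard_write // /copy_tape ltnn tape_of_marked.
  - by rewrite guard_self //; exact: upd_id.
split; first by rewrite /halted S'.
split; first by rewrite S'.
split; last split => [j lt_j|]; rewrite T0 /upd /copy_tape //=.
- by rewrite eqSS ltn_eqF // lt_j.
- by rewrite eqxx.
Qed.

Lemma init_conf_is x :
  conf_is (init_conf transducer_tm ord0 x) (Read q0) 0 0 (tape_of x) (tape_of [::]).
Proof. by split => // -[|j] //=; rewrite nth_nil. Qed.

Lemma reach_rewind x : let out := transduce tstep tfinal q0 x in
  conf_is (run (size out + 2 * size x + 3) (init_conf transducer_tm ord0 x))
    Rewind (size x).+1 (size out).+1 (tape_of x) (tape_of out).
Proof.
move=> out.
have C1 : conf_is (run 1 (init_conf transducer_tm ord0 x)) (Read q0) 1 1 (tape_of x) (tape_of [::]).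
  apply: (run1_conf (init_conf_is x)) => //; rewrite guard_self //; exact: upd_id.
have C3 := read_end_run (read_input_run (u := [::]) (o := [::]) (erefl x) C1).
have -> : size out + 2 * size x + 3 =
          1 + (size (tr_output tstep q0 x) + 2 * size x) + (size (tfinal (tr_state tstep q0 x))).+2.
  by rewrite /out transduceE size_cat; lia.
by rewrite 2!runD /out transduceE.
Qed.

Lemma rewind_copy_done x o c h0 h1 :
  conf_is c Rewind h0 h1 (tape_of x) (tape_of o) ->
  let c' := run (maxn h0 h1 + (size o).+2) c in
  halted c' /\ tm_accept transducer_tm (c_state c') /\ tape_prefix c' ord0 o.
Proof.
move=> Hc c'; rewrite /c' (_ : maxn h0 h1 + _ = maxn h0 h1 + 1 + size o + 1); last lia.
have C1 := rewind_run (tape_of_marked x) (tape_of_marked o) (erefl _) Hc.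
have C2 : conf_is (run 1 (run (maxn h0 h1) c)) Copy 1 1 (copy_tape o x 0) (tape_of o).
  by apply: (run1_conf C1) => //; rewrite guard_self // => -[|k].
by rewrite 3!runD; apply: copy_done; exact: (copy_run (add0n (size o)) C2).
Qed.

Theorem transducer_lin_time : lin_time_computable 2 (transduce tstep tfinal q0).
Proof.
exists ord0; split => //; exists transducer_tm; split; first exact: transducer_tm_wf.
exists (3 * K + 6); split; first by rewrite addnS.
move=> x; set out := transduce tstep tfinal q0 x.
exists (size out + 2 * size x + 3 + (maxn (size x).+1 (size out).+1 + (size out).+2)); split.
  have := size_transduce q0 x tstep_size tfinal_size; rewrite -/out; nia.
by rewrite runD; apply: rewind_copy_done; exact: reach_rewind.
Qed.

End TransducerMachine.

(** * A normal form for the lamplighter group *)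

Import GRing.Theory Num.Theory.
Local Open Scope fset_scope.

Inductive tally := Plus | Minus | Sep.

Definition tally_code (a : tally) : option bool :=
  match a with Plus => Some true | Minus => Some false | Sep => None end.
Definition tally_decode (o : option bool) : tally :=
  match o with Some true => Plus | Some false => Minus | None => Sep end.
Lemma tally_codeK : cancel tally_code tally_decode. Proof. by case. Qed.
HB.instance Definition _ := Finite.copy tally (can_type tally_codeK).

Definition enc_int (z : int) : seq tally :=
  match z with Posz n => nseq n Plus | Negz n => nseq n.+1 Minus end ++ [:: Sep].

Definition tally_val (a : tally) : int :=
  match a with Plus => 1 | Minus => -1 | Sep => 0 end.

Fixpoint dec_ints (w : seq tally) (acc : int) : seq int :=
  match w with
  | [::] => [::]
  | Sep :: w' => acc :: dec_ints w' 0
  | a :: w' => dec_ints w' (acc + tally_val a)%R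
  end.

Lemma dec_ints_nseq n a w acc : a != Sep ->
  dec_ints (nseq n a ++ w) acc = dec_ints w (acc + tally_val a *+ n)%R.
Proof.
by case: a => // _; elim: n acc => [|n IH] acc; rewrite ?addr0 //= IH mulrS addrA.
Qed.

Lemma dec_ints_enc z w : dec_ints (enc_int z ++ w) 0 = z :: dec_ints w 0.
Proof. by case: z => n; rewrite -catA dec_ints_nseq //=; congr cons; lia. Qed.

Definition enc_pt (p : Z2) : seq tally := enc_int p.1 ++ enc_int p.2.
Definition enc_pts (l : seq Z2) : seq tally := flatten (map enc_pt l).

Fixpoint pairs (zs : seq int) : seq Z2 :=
  if zs is a :: b :: r then (a, b) :: pairs r else [::].

Lemma enc_pts_cons p l : enc_pts (p :: l) = enc_int p.1 ++ enc_int p.2 ++ enc_pts l.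
Proof. exact/esym/catA. Qed.

Lemma enc_ptsK l : pairs (dec_ints (enc_pts l) 0) = l.
Proof.
by elim: l => [|[a b] l IH] //; rewrite enc_pts_cons !dec_ints_enc /= IH.
Qed.

Definition leZ2 (p q : Z2) : bool := (p.1 < q.1)%R || (p.1 == q.1) && (p.2 <= q.2)%R.
Definition ltZ2 (p q : Z2) : bool := (p.1 < q.1)%R || (p.1 == q.1) && (p.2 < q.2)%R.

Lemma leZ2_total : total leZ2.
Proof. by move=> [a b] [c d]; rewrite /leZ2 /=; apply/orP; case: (ltrgtP a c); lia. Qed.

Lemma leZ2_trans : transitive leZ2.
Proof. by move=> [a b] [c d] [e f]; rewrite /leZ2 /=; lia. Qed.

Lemma ltZ2_trans : transitive ltZ2.
Proof. by move=> [a b] [c d] [e f]; rewrite /ltZ2 /=; lia. Qed.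

Lemma ltZ2_irr : irreflexive ltZ2.
Proof. by move=> [a b]; rewrite /ltZ2 /=; lia. Qed.

Lemma ltZ2_eqF p q : ltZ2 p q -> (p == q) = false.
Proof. by move=> pq; apply/eqP => epq; move: pq; rewrite epq ltZ2_irr. Qed.

Lemma ltZ2_neqAle p q : ltZ2 p q = (p != q) && leZ2 p q.
Proof. by case: p q => [a b] [c d]; rewrite /ltZ2 /leZ2 xpair_eqE /=; lia. Qed.

Definition sorted_pts (B : {fset Z2}) : seq Z2 := sort leZ2 B.

Lemma mem_sorted_pts B : sorted_pts B =i B.
Proof. exact: mem_sort. Qed.

Lemma sorted_pts_lt B : sorted ltZ2 (sorted_pts B).
Proof.
rewrite sorted_pairwise; last exact: ltZ2_trans.
have : pairwise [rel p q | (p != q) && leZ2 p q] (sorted_pts B).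
  rewrite pairwise_relI -uniq_pairwise sort_uniq fset_uniq -sorted_pairwise //.
    exact: sort_sorted leZ2_total _.
  exact: leZ2_trans.
by apply: sub_pairwise => p q /=; rewrite ltZ2_neqAle.
Qed.

Lemma sorted_ptsE B s : sorted ltZ2 s -> s =i B -> sorted_pts B = s.
Proof.
move=> s_lt sB; apply: (irr_sorted_eq ltZ2_trans ltZ2_irr (sorted_pts_lt B) s_lt) => p.
by rewrite mem_sorted_pts sB.
Qed.

Definition negZ2 (p : Z2) : Z2 := (- p.1, - p.2)%R.

Lemma negZ2K : involutive negZ2.
Proof. by move=> [a b]; rewrite /negZ2 /= !opprK. Qed.

Lemma addZ2K p : cancel (addZ2 p) (addZ2 (negZ2 p)).
Proof. by move=> [a b]; rewrite /addZ2 /=; congr pair; lia. Qed.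

Lemma addZ2NK p : cancel (addZ2 (negZ2 p)) (addZ2 p).
Proof. by move=> [a b]; rewrite /addZ2 /=; congr pair; lia. Qed.

Lemma mem_shiftZ2 p B y : (y \in shiftZ2 p B) = (addZ2 (negZ2 p) y \in B).
Proof. by rewrite -{1}(addZ2NK p y) mem_imfset //; exact: can_inj (addZ2K p). Qed.

Lemma mem_map_addZ2 p s y : (y \in map (addZ2 p) s) = (addZ2 (negZ2 p) y \in s).
Proof. by rewrite -{1}(addZ2NK p y) mem_map //; exact: can_inj (addZ2K p). Qed.

Lemma ltZ2_addl p : {homo addZ2 p : x y / ltZ2 x y}.
Proof. by move=> [a b] [c d]; rewrite /ltZ2 /addZ2 /=; lia. Qed.

Lemma sorted_pts_shift p B : sorted_pts (shiftZ2 p B) = map (addZ2 p) (sorted_pts B).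
Proof.
apply: sorted_ptsE => [|y]; first exact: homo_sorted (ltZ2_addl p) _ (sorted_pts_lt B).
by rewrite mem_map_addZ2 mem_sorted_pts mem_shiftZ2.
Qed.

Definition enc_lamp (g : lamp) : seq tally :=
  enc_pts (g.2 :: sorted_pts (shiftZ2 (negZ2 g.2) g.1)).

Definition dec_lamp (w : seq tally) : lamp :=
  if pairs (dec_ints w 0) is p :: l then (shiftZ2 p [fset x | x in l], p) else (fset0, (0, 0)%R).

Lemma enc_lampK : cancel enc_lamp dec_lamp.
Proof.
move=> [A p]; rewrite /dec_lamp /enc_lamp enc_ptsK; congr pair; apply/fsetP => y.
by rewrite mem_shiftZ2 inE mem_sorted_pts mem_shiftZ2 negZ2K addZ2NK.
Qed.

Definition lamp_words : pred (seq tally) := [pred w | w == enc_lamp (dec_lamp w)].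

Lemma lamp_words_mul (f : seq tally -> seq tally) s :
  (forall g, f (enc_lamp g) = enc_lamp (lamp_mul g s)) ->
  forall w, w \in lamp_words -> f w \in lamp_words /\ dec_lamp (f w) = lamp_mul (dec_lamp w) s.
Proof.
move=> fE w /eqP ->; rewrite fE !enc_lampK.
by split => //; rewrite inE enc_lampK.
Qed.

(** * The generators as transducers *)

Lemma mem_symdiff A B y : (y \in symdiff A B) = (y \in A) (+) (y \in B).
Proof. by rewrite /symdiff in_fsetU !in_fsetD; case: (y \in A); case: (y \in B). Qed.

Definition add_unit (e : int) (a : tally) : seq tally :=
  match e, a with
  | Posz 0, _ => [:: a]
  | Posz _, Sep => [:: Plus; Sep]
  | Posz _, Plus => [:: Plus; Plus]
  | Negz _, Sep => [:: Minus; Sep]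
  | Negz _, Minus => [:: Minus; Minus]
  | _, _ => [::]
  end.

Lemma enc_int_add_unit z e : (`|e| <= 1)%R ->
  enc_int (z + e) = add_unit e (head Sep (enc_int z)) ++ behead (enc_int z).
Proof.
move=> e1; have [->|[->|->]] : (e = 0 \/ e = 1 \/ e = -1)%R by lia.
- by rewrite addr0; case: z => [[|n]|n].
- case: z => [n|[|n]].
  + by rewrite (_ : n%:Z + 1 = n.+1%:Z)%R; [case: n | lia].
  + by rewrite (_ : Negz 0 + 1 = 0)%R; last lia.
  + by rewrite (_ : Negz n.+1 + 1 = Negz n)%R; last lia.
- case: z => [[|n]|n].
  + by rewrite (_ : 0%:Z - 1 = Negz 0)%R; last lia.
  + by rewrite (_ : n.+1%:Z - 1 = n%:Z)%R; last lia.
  + by rewrite (_ : Negz n - 1 = Negz n.+1)%R; last lia.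
Qed.

(* [enc_lamp g] lists the two coordinates of the position, then the first and
   second coordinates of the lamps in turn; [k] records whether the current
   integer is a lamp coordinate and whether it is a second coordinate. *)
Definition coord_next (k : bool * bool) : bool * bool := (k.1 || k.2, ~~ k.2).

Section Move.
Variable d : Z2.
Hypotheses (d1 : (`|d.1| <= 1)%R) (d2 : (`|d.2| <= 1)%R).

Definition coord_delta (k : bool * bool) : int :=
  let e := if k.2 then d.2 else d.1 in if k.1 then (- e)%R else e.

Definition move_step (q : bool * bool * bool) (a : tally) : bool * bool * bool * seq tally :=
  let: (k, copying) := q in
  (if a is Sep then (coord_next k, false) else (k, true),
   if copying then [:: a] else add_unit (coord_delta k) a).

Definition move_final (q : bool * bool * bool) : seq tally := [::].

Local Notation move_tr := (transduce move_step move_final).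

Lemma move_copy k m b w : b != Sep ->
  move_tr (k, true) (nseq m b ++ Sep :: w) = nseq m b ++ Sep :: move_tr (coord_next k, false) w.
Proof. by case: b => // _; elim: m => //= m ->. Qed.

Lemma move_int k z w :
  move_tr (k, false) (enc_int z ++ w) = enc_int (z + coord_delta k) ++ move_tr (coord_next k, false) w.
Proof.
rewrite enc_int_add_unit; last by rewrite /coord_delta; case: k => [[] []]; rewrite ?normrN.
by case: z => [[|n]|n]; rewrite /= -?catA /= ?move_copy // cats0.
Qed.

Lemma move_pts l :
  move_tr (true, false, false) (enc_pts l) = enc_pts (map (addZ2 (negZ2 d)) l).
Proof.
elim: l => [|p l IH] //; rewrite map_cons !enc_pts_cons !move_int IH.
by rewrite /= [(p.1 + _)%R]addrC [(p.2 + _)%R]addrC.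
Qed.

Lemma move_enc g : move_tr (false, false, false) (enc_lamp g) = enc_lamp (lamp_mul g (fset0, d)).
Proof.
case: g => A p; rewrite /enc_lamp !enc_pts_cons !move_int move_pts -sorted_pts_shift.
congr (_ ++ _ ++ enc_pts (sorted_pts _)); apply/fsetP => y.
rewrite !mem_shiftZ2 /= mem_symdiff mem_shiftZ2 in_fset0 addbF.
by congr (_ \in A); case: y => a b; rewrite /addZ2 /negZ2 /=; congr pair; lia.
Qed.

End Move.

Inductive toggle_state := TCopy of bool | TSearch | TZeroX | TRest.

Definition toggle_code (q : toggle_state) : option (option (option bool)) :=
  match q with
  | TCopy b => Some (Some (Some b)) | TRest => Some (Some None)
  | TZeroX => Some None | TSearch => None
  end.
Definition toggle_decode (c : option (option (option bool))) : toggle_state :=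
  match c with
  | Some (Some (Some b)) => TCopy b | Some (Some None) => TRest
  | Some None => TZeroX | None => TSearch
  end.
Lemma toggle_codeK : cancel toggle_code toggle_decode. Proof. by case. Qed.
HB.instance Definition _ := Finite.copy toggle_state (can_type toggle_codeK).

(* [TCopy b] copies an integer, and one more if [b]; [TSearch] and [TZeroX]
   look for the origin in the sorted list, [TZeroX] after a first coordinate 0. *)
Definition toggle_step (q : toggle_state) (a : tally) : toggle_state * seq tally :=
  match q, a with
  | TCopy b, Sep => (if b then TCopy false else TSearch, [:: Sep])
  | TCopy _, _ => (q, [:: a])
  | TSearch, Sep => (TZeroX, [::])
  | TSearch, Minus => (TCopy true, [:: Minus])
  | TSearch, Plus => (TRest, [:: Sep; Sep; Plus])
  | TZeroX, Sep => (TRest, [::])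
  | TZeroX, Minus => (TCopy false, [:: Sep; Minus])
  | TZeroX, Plus => (TRest, [:: Sep; Sep; Sep; Plus])
  | TRest, _ => (TRest, [:: a])
  end.

Definition toggle_final (q : toggle_state) : seq tally := if q is TSearch then [:: Sep; Sep] else [::].

Local Notation toggle_tr := (transduce toggle_step toggle_final).

Definition O2 : Z2 := (0, 0)%R.

Fixpoint toggle_origin (l : seq Z2) : seq Z2 :=
  if l is p :: l' then
    if ltZ2 p O2 then p :: toggle_origin l' else if p == O2 then l' else O2 :: l
  else [:: O2].

Lemma toggle_rest w : toggle_tr TRest w = w.
Proof. by elim: w => //= a w ->. Qed.

Lemma toggle_copy b n a w : a != Sep ->
  toggle_tr (TCopy b) (nseq n a ++ Sep :: w) =
  nseq n a ++ Sep :: toggle_tr (if b then TCopy false else TSearch) w.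
Proof. by case: a => // _; elim: n => //= n ->. Qed.

Lemma toggle_copy_int b z w :
  toggle_tr (TCopy b) (enc_int z ++ w) = enc_int z ++ toggle_tr (if b then TCopy false else TSearch) w.
Proof. by case: z => n; rewrite /enc_int -!catA toggle_copy. Qed.

Lemma toggle_search l : toggle_tr TSearch (enc_pts l) = enc_pts (toggle_origin l).
Proof.
elim: l => [|[[[|m]|m] [[|k]|k]] l IH] //; rewrite !enc_pts_cons /=.
all: rewrite ?toggle_rest //; do 2 (rewrite -?catA ?cat1s ?toggle_copy //=).
all: by rewrite IH.
Qed.

Lemma gtZ2_origin q : ltZ2 q O2 = false -> q != O2 -> ltZ2 O2 q.
Proof. by case: q => a b; rewrite /ltZ2 xpair_eqE /=; lia. Qed.

Lemma toggle_origin_path p l : ltZ2 p O2 -> path ltZ2 p l -> path ltZ2 p (toggle_origin l).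
Proof.
elim: l p => [|q l IH] p pO /=; first by rewrite pO.
case/andP=> pq ql; case: ifP => [qO|qNO]; first by rewrite /= pq IH.
case: eqP => [_|/eqP qNO2]; first exact: (path_le ltZ2_trans pq).
by rewrite /= pO gtZ2_origin.
Qed.

Lemma toggle_origin_sorted l : sorted ltZ2 l -> sorted ltZ2 (toggle_origin l).
Proof.
case: l => [|q l] //= ql; case: ifP => [qO|qNO]; first exact: toggle_origin_path.
case: eqP => [_|/eqP qNO2]; first exact: path_sorted ql.
by rewrite /= gtZ2_origin.
Qed.

Lemma path_notin p x l : path ltZ2 p l -> ~~ ltZ2 p x -> x \notin l.
Proof.
move=> pl pNx; apply/negP => xl.
by move: pNx; rewrite (allP (order_path_min ltZ2_trans pl) x xl).
Qed.

Lemma mem_toggle_origin_neq y l : y != O2 -> (y \in toggle_origin l) = (y \in l).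
Proof.
move=> yNO; elim: l => [|q l IH] /=; first by rewrite inE (negbTE yNO).
case: ifP => _; first by rewrite !inE IH.
by case: eqP => [->|_]; rewrite inE (negbTE yNO).
Qed.

Lemma origin_in_toggle l : sorted ltZ2 l -> (O2 \in toggle_origin l) = (O2 \notin l).
Proof.
elim: l => [|q l IH] //= ql; rewrite inE.
case: ifP => [qO|qNO]; first by rewrite inE IH ?(path_sorted ql) // eq_sym (ltZ2_eqF qO).
have O2Nl := path_notin ql (negbT qNO).
case: eqP => [qO2|/eqP qNO2]; first by rewrite qO2 eqxx (negbTE O2Nl).
by rewrite !inE eqxx eq_sym (negbTE qNO2) (negbTE O2Nl).
Qed.

Lemma mem_toggle_origin l y : sorted ltZ2 l ->
  (y \in toggle_origin l) = (y \in l) (+) (y == O2).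
Proof.
move=> sl; case: (eqVneq y O2) => [->|yNO]; last by rewrite addbF mem_toggle_origin_neq.
by rewrite origin_in_toggle // addbT.
Qed.

Lemma toggle_enc g : toggle_tr (TCopy true) (enc_lamp g) = enc_lamp (lamp_mul g ([fset O2], O2)).
Proof.
case: g => A p; rewrite /enc_lamp !enc_pts_cons !toggle_copy_int toggle_search.
have -> : (lamp_mul (A, p) ([fset O2], O2)).2 = p by case: p => a b; rewrite /= /addZ2 /= !addr0.
congr (_ ++ _ ++ enc_pts _); symmetry; apply: sorted_ptsE => [|y].
  exact/toggle_origin_sorted/sorted_pts_lt.
rewrite mem_toggle_origin ?sorted_pts_lt // mem_sorted_pts !mem_shiftZ2.
by rewrite mem_symdiff mem_shiftZ2 negZ2K addZ2K in_fset1.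
Qed.

Definition lamp_mul_computable (s : lamp) : Prop :=
  exists f, lin_time_computable 2 f /\
    forall w, w \in lamp_words -> f w \in lamp_words /\ dec_lamp (f w) = lamp_mul (dec_lamp w) s.

Lemma transducer_mul_computable (Q : finType) (q0 : Q) tstep tfinal K s :
  (forall q a, size (tstep q a).2 <= K) -> (forall q, size (tfinal q) <= K) ->
  (forall g, transduce tstep tfinal q0 (enc_lamp g) = enc_lamp (lamp_mul g s)) ->
  lamp_mul_computable s.
Proof.
move=> Kstep Kfinal fE; exists (transduce tstep tfinal q0).
by split; [exact: transducer_lin_time Kstep Kfinal | exact: lamp_words_mul fE].
Qed.

Lemma move_computable d : (`|d.1| <= 1)%R -> (`|d.2| <= 1)%R -> lamp_mul_computable (fset0, d).
Proof.
move=> d1 d2; apply: (@transducer_mul_computable _ (false, false, false) (move_step d) move_final 2).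
- by case=> [k []] a //=; case: (coord_delta d k) => [[|n]|n]; case: a.
- by [].
- exact: move_enc.
Qed.

Lemma toggle_computable : lamp_mul_computable ([fset O2], O2).
Proof.
apply: (@transducer_mul_computable _ (TCopy true) toggle_step toggle_final 4); last exact: toggle_enc.
- by case=> [[]|||]; case.
- by case.
Qed.

Theorem theorem2p2 : cayley_lin_time 2 lamp_mul lamp_gens.
Proof.
exists tally, lamp_words, dec_lamp; split.
  by move=> u v /eqP uE /eqP vE e; rewrite uE vE e.
split; first by move=> g; exists (enc_lamp g); rewrite ?inE enc_lampK.
move=> s; rewrite !inE => /orP[/eqP->|/or4P[] /eqP->]; first exact: toggle_computable.
all: by apply: move_computable.
Qed.
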